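(* For all integers $n\geq0$ and $m\geq1$, we have $a_{2m}^{\star}(n)\equiv 0 \pmod{2m}$.
   Context: A partition is self-conjugate if its Young diagram is symmetric about the main diagonal. The hook length of the cell $(i,j)$ of a Young diagram is the number of cells to its right in row $i$ plus the number below it in column $j$ plus $1$; $n_t(\lambda)$ is the number of cells of $\lambda$ with hook length $t$. Define $a_t^{\star}(n)=\sum n_t(\lambda)$, the sum over all self-conjugate partitions $\lambda$ of $n$ (so $a_t^\star(0)=0$). *)

From mathcomp Require Import all_boot all_order.
Set Implicit Arguments. Unset Strict Implicit. Unset Printing Implicit Defensive.

(* A partition of n is encoded as a nonincreasing n-tuple of parts in 'I_(n+1)
   (padded with trailing zeros) whose entries sum to n.  This is in bijection
   with integer partitions of n (a partition of n has at most n parts, each <= n). *)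

Definition part_of (n : nat) (t : n.-tuple 'I_n.+1) (i : nat) : nat :=
  nth 0 (map (@nat_of_ord n.+1) t) i.

Definition is_partition (n : nat) (t : n.-tuple 'I_n.+1) : bool :=
  [forall i : 'I_n, forall j : 'I_n, (i <= j) ==> (part_of t j <= part_of t i)]
  && (\sum_(i < n) part_of t i == n).

Definition conj_part (n : nat) (t : n.-tuple 'I_n.+1) (j : nat) : nat :=
  #|[pred k : 'I_n | j < part_of t k]|.

Definition self_conjugate (n : nat) (t : n.-tuple 'I_n.+1) : bool :=
  [forall j : 'I_n, conj_part t j == part_of t j].

(* hook length of cell (i,j) (0-indexed):
   arm = lambda_i - j - 1, leg = lambda'_j - i - 1, hook = arm + leg + 1 *)
Definition hook (n : nat) (t : n.-tuple 'I_n.+1) (i j : nat) : nat :=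
  (part_of t i - j - 1) + (conj_part t j - i - 1) + 1.

Definition in_diagram (n : nat) (t : n.-tuple 'I_n.+1) (i j : nat) : bool :=
  j < part_of t i.

Definition nhook (n : nat) (t : n.-tuple 'I_n.+1) (h : nat) : nat :=
  #|[pred c : 'I_n * 'I_n.+1 | in_diagram t c.1 c.2 && (hook t c.1 c.2 == h)]|.

Definition astar (h n : nat) : nat :=
  \sum_(t : n.-tuple 'I_n.+1 | is_partition t && self_conjugate t) nhook t h.

From mathcomp Require Import all_boot all_order.
From mathcomp Require Import zify.
Set Implicit Arguments. Unset Strict Implicit. Unset Printing Implicit Defensive.

(* A self-conjugate partition is determined by the set P of arms k of its
   diagonal cells, and its size is the weight of P, the sum of the diagonal hook
   lengths 2 k + 1.  The number of cells of hook length t is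
   2 #{k in P | t <= k, k - t \notin P} + #{k in P | k < t, t - 1 - k \in P}.
   Let T(N) be the sum of this count over all P of weight N.  For even t,
   moving a counted k down to k - t, and deleting a counted pair {k, t - 1 - k},
   are bijections onto configurations of weight N - 2 t; counting the images by
   inclusion-exclusion gives T(N + 2 t) = T(N) + t #{P | weight P = N}, while
   T(N) = 0 for N < 2 t.  Hence t divides T(n) = a*_t(n). *)

Lemma card_in_bij (T U : finType) (A : {set T}) (B : {set U}) (f : T -> U) (g : U -> T) :
  {in A, forall x, f x \in B} -> {in B, forall y, g y \in A} ->
  {in A, cancel f g} -> {in B, cancel g f} -> #|A| = #|B|.
Proof.
move=> fAB gBA fK gK; apply/eqP; rewrite eqn_leq; apply/andP; split.
- rewrite -(card_in_imset (f:=f) (D:=A)); last by move=> x y xA yA /(congr1 g); rewrite !fK.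
  by apply: subset_leq_card; apply/subsetP=> y /imsetP[x xA ->]; exact: fAB.
- rewrite -(card_in_imset (f:=g) (D:=B)); last by move=> x y xA yA /(congr1 f); rewrite !gK.
  by apply: subset_leq_card; apply/subsetP=> y /imsetP[x xA ->]; exact: gBA.
Qed.

Lemma sum_card_pairs (T U : finType) (c : pred T) (F : T -> U -> bool) :
  \sum_(x | c x) \sum_(y : U) (F x y : nat) = #|[set p : T * U | c p.1 && F p.1 p.2]|.
Proof.
rewrite pair_big_dep /= -sum1_card /= big_mkcond [RHS]big_mkcond /=.
by apply: eq_bigr => p _; rewrite inE; case: (c p.1); case: (F p.1 p.2).
Qed.

Lemma sum_nat_cond (T : finType) (c : pred T) (b : T -> bool) :
  \sum_(k | c k) (b k : nat) = \sum_k (c k && b k : nat).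
Proof. by rewrite big_mkcond; apply: eq_bigr => k _; case: (c k). Qed.

Lemma sum_nat_shift t K (F : nat -> nat) :
  \sum_(t <= i < K) F i = \sum_(0 <= i < K - t) F (i + t).
Proof. by have := big_addn 0 K t xpredT F; rewrite add0n. Qed.

Lemma sum_nat_cut V W (F : nat -> nat) : V <= W -> (forall i, V <= i -> i < W -> F i = 0) ->
  \sum_(0 <= i < W) F i = \sum_(0 <= i < V) F i.
Proof.
move=> VW h; rewrite (@big_cat_nat _ _ _ V 0 W) //= [X in _ + X]big1_seq ?addn0 //.
by move=> i; rewrite mem_index_iota => hi; apply: h; lia.
Qed.

Lemma sum_ltn_mul t K (F : nat -> nat) : t <= K ->
  \sum_(0 <= k < K) ((k < t) * F k) = \sum_(0 <= k < t) F k.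
Proof.
move=> tK; rewrite (big_nat_widen 0 t K) // [RHS]big_mkcond /=.
by apply: eq_bigr => i _; case: (i < t); rewrite ?mul1n ?mul0n.
Qed.

Lemma sum_ltn_count W c : c <= W -> \sum_(0 <= i < W) (i < c : nat) = c.
Proof.
move=> cW; rewrite (@sum_nat_cut c) //; last by move=> i ci _; rewrite ltnNge ci.
rewrite (eq_big_nat _ _ (F2 := fun _ => 1)); last by move=> i /andP[_ ->].
by rewrite sum_nat_const_nat muln1 subn0.
Qed.

Lemma sum_geq_shift W i (F : nat -> nat) : (forall d, W <= i + d -> F d = 0) ->
  \sum_(0 <= j < W) ((i <= j) * F (j - i)) = \sum_(0 <= d < W) F d.
Proof.
move=> hF; case: (leqP i W) => iW; last first.
  rewrite !big1_seq // => j; rewrite mem_index_iota => hj.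
  - by apply: hF; lia.
  - by rewrite (_ : (i <= j) = false) //; lia.
rewrite (@big_cat_nat _ _ _ i 0 W) //= big1_seq ?add0n; last first.
  by move=> j; rewrite mem_index_iota => hj; rewrite (_ : (i <= j) = false) //; lia.
rewrite sum_nat_shift [RHS](@sum_nat_cut (W - i)) ?leq_subr //; last by move=> d h1 h2; apply: hF; lia.
by apply: eq_big_nat => d _; rewrite addnK leq_addl mul1n.
Qed.

Lemma sum_nat_bool_leq W (p : nat -> bool) : \sum_(0 <= i < W) (p i : nat) <= W.
Proof.
rewrite -[W in _ <= W]subn0 -[W - 0]muln1 -sum_nat_const_nat.
by apply: leq_sum => i _; exact: leq_b1.
Qed.

Lemma downclosed_ltn_count W (p : nat -> bool) : (forall i j, i <= j -> p j -> p i) ->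
  (forall j, p j -> j < W) -> forall j, p j = (j < \sum_(0 <= i < W) (p i : nat)).
Proof.
move=> dc bd j; have pW := sum_nat_bool_leq W p.
case: (boolP (p j)) => pj.
- have jW := bd _ pj.
  rewrite (@big_cat_nat _ _ _ j.+1 0 W) //=.
  have -> : \sum_(0 <= i < j.+1) (p i : nat) = j.+1.
    rewrite (eq_big_nat _ _ (F2 := fun _ => 1)); last by move=> i /andP[_ ij]; rewrite (dc i j).
    by rewrite sum_nat_const_nat muln1 subn0.
  by symmetry; apply/idP; lia.
- symmetry; apply/negbTE; rewrite -leqNgt.
  case: (leqP j W) => jW; last by lia.
  rewrite (@sum_nat_cut j) ?sum_nat_bool_leq //.
  by move=> i ji _; case: (boolP (p i)) => // pi; case/negP: pj; exact: (dc j i ji pi).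
Qed.

(* [P : {set 'I_K}] is read as a finite set of naturals; [has_val P x] tests
   membership of a natural number [x], which may be out of range. *)
Definition has_val K (P : {set 'I_K}) (x : nat) : bool := [exists k in P, val k == x].

Definition weight K (P : {set 'I_K}) := \sum_(k in P) (2 * k + 1).

Section SetsOfNaturals.

Variables (K : nat) (P : {set 'I_K}).

Lemma has_valE (k : 'I_K) : has_val P k = (k \in P).
Proof.
apply/idP/idP => [/existsP[z /andP[zP /eqP zk]] | kP].
  by rewrite (_ : k = z) //; apply: val_inj.
by apply/existsP; exists k; rewrite kP eqxx.
Qed.

Lemma has_val_lt x : has_val P x -> x < K.
Proof. by case/existsP=> z /andP[_ /eqP <-]; exact: ltn_ord. Qed.

Lemma has_val_setU1 (a : 'I_K) x : has_val (a |: P) x = (val a == x) || has_val P x.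
Proof.
apply/idP/idP => [/existsP[z /andP[]] | ].
- rewrite in_setU1 => /orP[/eqP -> -> // | zP zx].
  by apply/orP; right; apply/existsP; exists z; rewrite zP.
- case/orP => [ax | /existsP[z /andP[zP zx]]]; apply/existsP.
  + by exists a; rewrite setU11.
  + by exists z; rewrite in_setU1 zP orbT.
Qed.

Lemma has_val_setD1 (a : 'I_K) x : has_val (P :\ a) x = (val a != x) && has_val P x.
Proof.
apply/idP/idP => [/existsP[z /andP[]] | /andP[ax /existsP[z /andP[zP /eqP zx]]]].
- rewrite in_setD1 => /andP[za zP] /eqP zx.
  apply/andP; split; last by apply/existsP; exists z; rewrite zP zx eqxx.
  by rewrite -zx; apply: contra za => /eqP/val_inj ->.
- apply/existsP; exists z; rewrite in_setD1 zP zx eqxx !andbT; apply: contra ax => /eqP <-.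
  by rewrite zx.
Qed.

Lemma sum_has_val (F : nat -> nat) :
  \sum_(k in P) F k = \sum_(0 <= k < K) has_val P k * F k.
Proof.
rewrite big_mkord big_mkcond; apply: eq_bigr => k _; rewrite has_valE.
by case: (k \in P); rewrite ?mul1n ?mul0n.
Qed.

Lemma sum_val_eq d : \sum_(k in P) (val k == d : nat) = has_val P d.
Proof.
case: (boolP (has_val P d)) => [/existsP[k0 /andP[k0P /eqP e]] | nd].
- rewrite (big_setD1 k0) //= e eqxx big1 // => k; rewrite in_setD1 => /andP[kk0 _].
  apply/eqP; rewrite eqb0; apply: contra kk0 => /eqP ke; apply/eqP/val_inj; by rewrite /= ke e.
- rewrite big1 // => k kP; apply/eqP; rewrite eqb0; apply: contra nd => /eqP <-.
  by rewrite has_valE.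
Qed.

Lemma weight_ge (k : 'I_K) : k \in P -> 2 * k + 1 <= weight P.
Proof. by move=> kP; rewrite /weight (big_setD1 _ kP) /= leq_addr. Qed.

Lemma weight_ge2 (k l : 'I_K) : k \in P -> l \in P -> k != l ->
  (2 * k + 1) + (2 * l + 1) <= weight P.
Proof.
move=> kP lP kl; rewrite /weight (big_setD1 _ kP) /= leq_add2l.
have lP' : l \in P :\ k by rewrite !inE eq_sym kl.
by rewrite (big_setD1 _ lP') /= leq_addr.
Qed.

Lemma weight_setD1 (k : 'I_K) : k \in P -> weight P = 2 * k + 1 + weight (P :\ k).
Proof. by move=> kP; rewrite /weight (big_setD1 _ kP). Qed.

Lemma weight_setU1 (k : 'I_K) : k \notin P -> weight (k |: P) = 2 * k + 1 + weight P.
Proof. by move=> kP; rewrite /weight (big_setU1 _ kP). Qed.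

End SetsOfNaturals.

Section HookCounts.

Variables (K t : nat) (P : {set 'I_K}).

Definition nhooks := \sum_(k in P)
  (2 * ((t <= k) && ~~ has_val P (k - t)) + ((k < t) && has_val P (t - 1 - k))).
Definition ndown := \sum_(k in P) ((t <= k) && ~~ has_val P (k - t) : nat).
Definition npair := \sum_(k in P) ((k < t) && has_val P (t - 1 - k) : nat).
Definition nup := \sum_(k in P) (~~ has_val P (k + t) : nat).
Definition ngap :=
  \sum_(k : 'I_K | k < t) (~~ has_val P k && ~~ has_val P (t - 1 - k) : nat).
Definition nlow := \sum_(k in P) (k < t : nat).

Lemma nhooksE : nhooks = 2 * ndown + npair.
Proof. by rewrite /nhooks big_split /= -big_distrr. Qed.

Lemma sum_has_val_addn :
  \sum_(k in P) (has_val P (k + t) : nat) = \sum_(k in P) ((t <= k) && has_val P (k - t) : nat).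
Proof.
rewrite (eq_bigr (fun k : 'I_K => \sum_(j in P) (val j == k + t : nat))); last first.
  by move=> k _; rewrite sum_val_eq.
rewrite exchange_big; apply: eq_bigr => k _ /=.
case: (leqP t k) => tk /=; last by rewrite big1 // => j _; apply/eqP; rewrite eqb0; lia.
rewrite -sum_val_eq; apply: eq_bigr => j _.
by congr nat_of_bool; apply/idP/idP => /eqP h; apply/eqP; rewrite /= in h *; lia.
Qed.

Lemma nupE : nup = ndown + nlow.
Proof.
have split_up : nup + \sum_(k in P) (has_val P (k + t) : nat) = #|P|.
  by rewrite -big_split -sum1_card /=; apply: eq_bigr => k _; case: (has_val P _).
have split_card : #|P| = nlow + \sum_(k in P) ((t <= k) && has_val P (k - t) : nat) + ndown.
  rewrite -sum1_card /nlow /ndown -!big_split /=; apply: eq_bigr => k _.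
  by case: (leqP t k) => tk; case: (has_val P _).
move: split_up split_card; rewrite sum_has_val_addn; lia.
Qed.

Lemma ngapE : t <= K -> ngap + 2 * nlow = t + npair.
Proof.
move=> tK.
have ngap_nat : ngap = \sum_(0 <= k < t) (~~ has_val P k && ~~ has_val P (t - 1 - k) : nat).
  rewrite /ngap -(sum_ltn_mul _ tK) big_mkord [LHS]big_mkcond /=.
  by apply: eq_bigr => i _; case: (i < t); rewrite ?mul1n ?mul0n.
have nlow_nat : nlow = \sum_(0 <= k < t) (has_val P k : nat).
  rewrite /nlow (sum_has_val P (fun k => (k < t) : nat)) -(sum_ltn_mul _ tK).
  by apply: eq_bigr => i _; rewrite mulnC.
have npair_nat : npair = \sum_(0 <= k < t) (has_val P k && has_val P (t - 1 - k) : nat).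
  rewrite /npair (sum_has_val P (fun k => (k < t) && has_val P (t - 1 - k) : nat)).
  rewrite -(sum_ltn_mul _ tK); apply: eq_bigr => i _.
  by case: (i < t); case: (has_val P i); case: (has_val P _).
have reflect_sum : \sum_(0 <= k < t) (has_val P (t - 1 - k) : nat) = \sum_(0 <= k < t) (has_val P k : nat).
  rewrite [RHS]big_nat_rev /=; apply: eq_big_nat => i /andP[_ it].
  by rewrite add0n (_ : t - i.+1 = t - 1 - i) //; lia.
have incl_excl : \sum_(0 <= k < t) (~~ has_val P k && ~~ has_val P (t - 1 - k) : nat)
     + \sum_(0 <= k < t) (has_val P k : nat) + \sum_(0 <= k < t) (has_val P (t - 1 - k) : nat)
   = \sum_(0 <= k < t) 1 + \sum_(0 <= k < t) (has_val P k && has_val P (t - 1 - k) : nat).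
  rewrite -!big_split /=; apply: eq_bigr => i _.
  by case: (has_val P i); case: (has_val P _).
move: incl_excl; rewrite reflect_sum sum_nat_const_nat muln1 subn0 -npair_nat -ngap_nat -nlow_nat.
lia.
Qed.

Lemma nhooks_up_gap : t <= K -> 2 * nup + ngap = nhooks + t.
Proof. by move=> tK; have := ngapE tK; rewrite nhooksE nupE; lia. Qed.

End HookCounts.

Section ExchangeElements.

Variables (T : finType) (P : {set T}) (a b : T).

Lemma setU1_swapK : a \in P -> b \notin P -> a |: ((b |: (P :\ a)) :\ b) = P.
Proof.
move=> aP bP; apply/setP => z; rewrite !(in_setU1, in_setD1).
case: (eqVneq z a) => za; case: (eqVneq z b) => zb; try subst z;
  rewrite ?eqxx ?aP ?(negbTE bP) /= ?andbF ?orbF ?orbT //.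
Qed.

Lemma setU1_setD1_2K : a \in P -> b \in P -> a |: (b |: ((P :\ a) :\ b)) = P.
Proof.
move=> aP bP; apply/setP => z; rewrite !(in_setU1, in_setD1).
case: (eqVneq z a) => za; case: (eqVneq z b) => zb; try subst z;
  rewrite ?eqxx ?aP ?bP /= ?andbF ?orbF ?orbT //.
Qed.

Lemma setD1_setU1_2K : a \notin P -> b \notin P -> ((a |: (b |: P)) :\ a) :\ b = P.
Proof.
move=> aP bP; apply/setP => z; rewrite !(in_setU1, in_setD1).
case: (eqVneq z a) => za; case: (eqVneq z b) => zb; try subst z;
  rewrite ?eqxx ?(negbTE aP) ?(negbTE bP) /= ?andbF ?orbF ?orbT //.
Qed.

End ExchangeElements.

Definition marked K N (F : {set 'I_K.+1} -> 'I_K.+1 -> bool) :=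
  [set p : {set 'I_K.+1} * 'I_K.+1 | (weight p.1 == N) && F p.1 p.2].
Arguments marked : clear implicits.

Lemma sum_weight_marked K N (F : {set 'I_K.+1} -> 'I_K.+1 -> bool) :
  \sum_(P : {set 'I_K.+1} | weight P == N) \sum_k (F P k : nat) = #|marked K N F|.
Proof. exact: sum_card_pairs. Qed.

Section WeightShift.

Variables (K t N : nat).
Hypothesis NK : N + 2 * t <= K.

(* Moving a marked [k] down to [k - t] lowers the weight by [2 t]. *)
Lemma card_marked_shift : 0 < t ->
  #|marked K (N + 2 * t) (fun P k => (k \in P) && ((t <= k) && ~~ has_val P (k - t)))|
  = #|marked K N (fun P k => (k \in P) && ~~ has_val P (k + t))|.
Proof.
move=> t0.
pose down (p : {set 'I_K.+1} * 'I_K.+1) :=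
  let k' := (inord (p.2 - t) : 'I_K.+1) in (k' |: (p.1 :\ p.2), k').
pose up (p : {set 'I_K.+1} * 'I_K.+1) :=
  let k' := (inord (p.2 + t) : 'I_K.+1) in (k' |: (p.1 :\ p.2), k').
have markedA P (k : 'I_K.+1) :
    (P, k) \in marked K (N + 2 * t) (fun P k => (k \in P) && ((t <= k) && ~~ has_val P (k - t))) ->
   [/\ weight P = N + 2 * t, k \in P, t <= k, ~~ has_val P (k - t)
     & nat_of_ord (inord (k - t) : 'I_K.+1) = k - t].
  rewrite inE /= => /and4P[/eqP -> kP tk nk]; split => //.
  by rewrite inordK //; have := ltn_ord k; lia.
have markedB P (k : 'I_K.+1) :
    (P, k) \in marked K N (fun P k => (k \in P) && ~~ has_val P (k + t)) ->
   [/\ weight P = N, k \in P, ~~ has_val P (k + t)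
     & nat_of_ord (inord (k + t) : 'I_K.+1) = k + t].
  rewrite inE /= => /and3P[/eqP wP kP nk]; split => //.
  by rewrite inordK //; have := weight_ge kP; lia.
apply: (card_in_bij (f := down) (g := up)).
- move=> [P k] /markedA[wP kP tk nk vk]; rewrite /down /= inE /=.
  set k' := (inord (k - t) : 'I_K.+1).
  have k'P : k' \notin P :\ k by rewrite -has_valE has_val_setD1 vk (negbTE nk) andbF.
  rewrite weight_setU1 // setU11 has_val_setU1 has_val_setD1 vk /=.
  have := weight_setD1 kP; rewrite wP => e.
  apply/andP; split; first by apply/eqP; lia.
  rewrite subnK // eqxx /= orbF; apply/eqP => e2; move: vk; rewrite -/k' e2; lia.
- move=> [P k] /markedB[wP kP nk vk]; rewrite /up /= inE /=.
  set k' := (inord (k + t) : 'I_K.+1).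
  have k'P : k' \notin P :\ k by rewrite -has_valE has_val_setD1 vk (negbTE nk) andbF.
  rewrite weight_setU1 // setU11 has_val_setU1 has_val_setD1 vk /=.
  have := weight_setD1 kP; rewrite wP => e.
  rewrite (_ : k + t - t = k); last by lia.
  apply/and3P; split; [by apply/eqP; lia | by rewrite leq_addl | ].
  rewrite eqxx /= orbF; apply/eqP => e3; move: vk; rewrite -/k' e3; lia.
- move=> [P k] /markedA[wP kP tk nk vk]; rewrite /down /up /=.
  have -> : (inord ((inord (k - t) : 'I_K.+1) + t) : 'I_K.+1) = k.
    by apply: val_inj; rewrite /= vk inordK; have := ltn_ord k; lia.
  by rewrite setU1_swapK // -has_valE vk.
- move=> [P k] /markedB[wP kP nk vk]; rewrite /down /up /=.
  have -> : (inord ((inord (k + t) : 'I_K.+1) - t) : 'I_K.+1) = k.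
    by apply: val_inj; rewrite /= vk inordK; have := ltn_ord k; lia.
  by rewrite setU1_swapK // -has_valE vk.
Qed.

(* Removing a pair [k, t - 1 - k] of marked elements lowers the weight by [2 t];
   the two elements differ because [t] is even. *)
Lemma card_marked_pair : ~~ odd t ->
  #|marked K (N + 2 * t) (fun P k => (k \in P) && ((k < t) && has_val P (t - 1 - k)))|
  = #|marked K N (fun P k => (k < t) && (~~ has_val P k && ~~ has_val P (t - 1 - k)))|.
Proof.
move=> /even_halfK; rewrite -mul2n => ts.
pose rem (p : {set 'I_K.+1} * 'I_K.+1) :=
  ((p.1 :\ p.2) :\ (inord (t - 1 - p.2) : 'I_K.+1), p.2).
pose add (p : {set 'I_K.+1} * 'I_K.+1) :=
  (p.2 |: ((inord (t - 1 - p.2) : 'I_K.+1) |: p.1), p.2).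
have vk (k : 'I_K.+1) : k < t -> nat_of_ord (inord (t - 1 - k) : 'I_K.+1) = t - 1 - k.
  by move=> kt; rewrite inordK //; lia.
apply: (card_in_bij (f := rem) (g := add)).
- move=> [P k]; rewrite inE /= => /and4P[/eqP wP kP kt ik].
  rewrite /rem inE /=; set k' := (inord (t - 1 - k) : 'I_K.+1).
  have v' := vk k kt; rewrite -/k' in v'.
  have k'P : k' \in P :\ k.
    by rewrite -has_valE has_val_setD1 /= v' ik andbT; apply/eqP; lia.
  have := weight_setD1 kP; have := weight_setD1 k'P; rewrite wP => e1 e2.
  rewrite kt !has_val_setD1 /= v' eqxx /= ?andbF ?andbT /=.
  by apply/andP; split; [apply/eqP; lia | rewrite eqxx].
- move=> [P k]; rewrite inE /= => /and4P[/eqP wP kt nk nk'].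
  rewrite /add inE /=; set k' := (inord (t - 1 - k) : 'I_K.+1).
  have v' := vk k kt; rewrite -/k' in v'.
  have k'P : k' \notin P by rewrite -has_valE v'.
  have kP : k \notin k' |: P.
    by rewrite -has_valE has_val_setU1 /= v' (negbTE nk) orbF; apply/eqP; lia.
  rewrite weight_setU1 // weight_setU1 // wP setU11 kt has_val_setU1 has_val_setU1 /= v' eqxx orbT /=.
  by apply/eqP; lia.
- move=> [P k]; rewrite inE /= => /and4P[/eqP wP kP kt ik].
  rewrite /rem /add /=; set k' := (inord (t - 1 - k) : 'I_K.+1).
  have v' := vk k kt; rewrite -/k' in v'.
  by congr (_, _); apply: setU1_setD1_2K => //; rewrite -has_valE v'.
- move=> [P k]; rewrite inE /= => /and4P[/eqP wP kt nk nk'].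
  rewrite /rem /add /=; set k' := (inord (t - 1 - k) : 'I_K.+1).
  have v' := vk k kt; rewrite -/k' in v'.
  by congr (_, _); apply: setD1_setU1_2K; rewrite -has_valE ?v'.
Qed.

End WeightShift.

Definition hook_total K t N := \sum_(P : {set 'I_K.+1} | weight P == N) nhooks t P.

Section HookTotal.

Variables (K t : nat).
Hypothesis t_even : ~~ odd t.

Lemma hook_total_small N : N < 2 * t -> hook_total K t N = 0.
Proof.
move=> Nt; rewrite /hook_total big1 // => P /eqP wP.
rewrite /nhooks big1 // => k kP.
have wk := weight_ge kP.
have -> : (t <= k) = false by lia.
case: (boolP ((k < t) && has_val P (t - 1 - k))) => [/andP[kt ik] | _] //.
have vk : nat_of_ord (inord (t - 1 - k) : 'I_K.+1) = t - 1 - k.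
  by rewrite inordK //; have := has_val_lt ik; lia.
have k'P : (inord (t - 1 - k) : 'I_K.+1) \in P by rewrite -has_valE vk.
have ts : t = 2 * t./2 by rewrite mul2n even_halfK.
have kk' : k != inord (t - 1 - k) by apply/eqP => e; move: vk; rewrite -e; lia.
by have := weight_ge2 kP k'P kk'; rewrite vk; lia.
Qed.

Hypothesis t_gt0 : 0 < t.

Lemma hook_total_rec N : N + 2 * t <= K ->
  hook_total K t (N + 2 * t) = hook_total K t N + t * #|[set P : {set 'I_K.+1} | weight P == N]|.
Proof.
move=> NK; have tK : t <= K by lia.
rewrite /hook_total (eq_bigr (fun P => 2 * ndown t P + npair t P)); last by move=> P _; rewrite nhooksE.
rewrite big_split /= -big_distrr /=.
rewrite (eq_bigr _ (fun P _ => sum_nat_cond _ _ : ndown t P = _)).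
rewrite (eq_bigr _ (fun P _ => sum_nat_cond _ _ : npair t P = _)) !sum_weight_marked.
rewrite (card_marked_shift NK t_gt0) (card_marked_pair NK t_even) -!sum_weight_marked.
rewrite -(eq_bigr _ (fun P _ => sum_nat_cond _ _ : nup t P = _)).
rewrite -(eq_bigr _ (fun P _ => sum_nat_cond _ _ : ngap t P = _)).
rewrite big_distrr -big_split /=.
rewrite (eq_bigr (fun P => nhooks t P + t)); last by move=> P _; apply: nhooks_up_gap; lia.
rewrite big_split /= sum_nat_const mulnC; congr (_ + _ * _).
by apply: eq_card => P; rewrite inE.
Qed.

Lemma hook_total_dvd N : N <= K -> t %| hook_total K t N.
Proof.
elim/ltn_ind: N => N IH NK.
case: (ltnP N (2 * t)) => Nt; first by rewrite hook_total_small.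
rewrite -(subnK Nt) hook_total_rec; last by rewrite subnK.
by rewrite dvdn_add ?dvdn_mulr // IH //; lia.
Qed.

End HookTotal.

Definition nge K (P : {set 'I_K}) d := \sum_(k in P) (d <= k : nat).

(* The self-conjugate diagram whose diagonal hooks have arms [P]: for [i <= j],
   the cell [(i, j)] lies in it iff at least [i + 1] arms are [>= j - i]. *)
Definition cell K (P : {set 'I_K}) i j := minn i j < nge P (maxn i j - minn i j).

Section Diagram.

Variables (K : nat) (P : {set 'I_K}).

Lemma nge_succ d : nge P d = nge P d.+1 + has_val P d.
Proof. by rewrite /nge -sum_val_eq -big_split /=; apply: eq_bigr => k _; lia. Qed.

Lemma leq_nge d d' : d <= d' -> nge P d' <= nge P d.
Proof. by move=> dd; apply: leq_sum => k _; lia. Qed.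

Lemma nge_leq_card d : nge P d <= K.
Proof.
apply: leq_trans (_ : \sum_(k in P) 1 <= K); first by apply: leq_sum => k _; case: (d <= k).
by rewrite sum1_card; apply: leq_trans (max_card _) _; rewrite card_ord.
Qed.

Lemma nge_gt0 d : 0 < nge P d -> d < K.
Proof.
move=> h; rewrite ltnNge; apply/negP => Kd; move: h.
by rewrite /nge big1 // => k _; have := ltn_ord k; lia.
Qed.

Lemma nge_weight d : (2 * d + 1) * nge P d <= weight P.
Proof. by rewrite /nge big_distrr /=; apply: leq_sum => k _; case: (leqP d k) => h /=; lia. Qed.

Lemma sum_nge W d0 : K <= W -> d0 <= 1 ->
  \sum_(0 <= d < W) (d0 <= d) * nge P d = \sum_(k in P) (k.+1 - d0).
Proof.
move=> KW d01; rewrite /nge (eq_bigr _ (fun d _ => big_distrr _ _ _)) exchange_big /=.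
apply: eq_bigr => k _; have kW : k < W by have := ltn_ord k; lia.
have -> : k.+1 - d0 = \sum_(0 <= d < W) ((d < k.+1) - (d < d0)).
  by rewrite sumnB ?sum_ltn_count //; [lia | move=> d _; lia].
by apply: eq_bigr => d _; lia.
Qed.

Lemma cell_sym i j : cell P i j = cell P j i.
Proof. by rewrite /cell minnC maxnC. Qed.

Lemma cellE i j :
  (cell P i j : nat) = (i <= j) * (i < nge P (j - i)) + (j < i) * (j < nge P (i - j)).
Proof. by rewrite /cell; case: (leqP i j) => h; lia. Qed.

Lemma cell_succ i j : cell P i j.+1 -> cell P i j.
Proof.
rewrite /cell; case: (leqP j.+1 i) => h.
- have -> : minn i j = j by lia.
  have -> : maxn i j = i by lia.
  rewrite (_ : i - j = (i - j.+1).+1); last by lia.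
  by have := nge_succ (i - j.+1); lia.
- have -> : minn i j = i by lia.
  have -> : maxn i j = j by lia.
  by have := @leq_nge (j - i) (j.+1 - i); lia.
Qed.

Lemma cell_leq_r i j j' : j' <= j -> cell P i j -> cell P i j'.
Proof.
move=> jj; rewrite -(subnK jj); elim: (j - j') => [|e IH] //= h.
by apply: IH; apply: cell_succ; rewrite -addSn.
Qed.

Lemma cell_leq_l i i' j : i' <= i -> cell P i j -> cell P i' j.
Proof. by move=> ii; rewrite cell_sym => h; rewrite cell_sym; apply: cell_leq_r h. Qed.

Lemma cell_weight i j : cell P i j -> maxn i j < weight P.
Proof.
rewrite /cell => h; have := nge_weight (maxn i j - minn i j).
set c := nge P _ in h *; set d := maxn i j - minn i j.
have : d + minn i j = maxn i j by rewrite /d; lia.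
nia.
Qed.

Lemma cell_bound i j : cell P i j -> maxn i j < K.*2.
Proof.
rewrite /cell => h; have := nge_leq_card (maxn i j - minn i j).
have := @nge_gt0 (maxn i j - minn i j); lia.
Qed.

Lemma nge_band i d : K.*2 <= i + d -> (i < nge P d : nat) = 0.
Proof.
move=> h; apply/eqP; rewrite eqb0 -leqNgt.
by have := nge_leq_card d; have := @nge_gt0 d; lia.
Qed.

Lemma sum_band d0 : d0 <= 1 ->
  \sum_(0 <= i < K.*2) \sum_(0 <= j < K.*2) ((i + d0 <= j) * (i < nge P (j - i)))
  = \sum_(k in P) (k.+1 - d0).
Proof.
move=> d01; rewrite -(@sum_nge K.*2) //; last by lia.
rewrite (eq_bigr (fun i => \sum_(0 <= d < K.*2) ((d0 <= d) * (i < nge P d)))); last first.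
  move=> i _; rewrite -[RHS](@sum_geq_shift _ i (fun d => (d0 <= d) * (i < nge P d))).
    by apply: eq_bigr => j _; case: (leqP i j) => ij; rewrite ?mul0n ?mul1n; lia.
  by move=> d /nge_band h; rewrite h muln0.
rewrite exchange_big_nat; apply: eq_bigr => d _ /=.
by rewrite -big_distrr /= sum_ltn_count //; have := nge_leq_card d; lia.
Qed.

Lemma sum_cells : \sum_(0 <= i < K.*2) \sum_(0 <= j < K.*2) (cell P i j : nat) = weight P.
Proof.
rewrite (eq_bigr (fun i => \sum_(0 <= j < K.*2) ((i + 0 <= j) * (i < nge P (j - i))) +
    \sum_(0 <= j < K.*2) ((j + 1 <= i) * (j < nge P (i - j))))); last first.
  by move=> i _; rewrite -big_split /=; apply: eq_bigr => j _; rewrite cellE addn0 addn1.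
rewrite big_split /= [X in _ + X]exchange_big_nat !sum_band // /weight -big_split /=.
by apply: eq_bigr => k _; lia.
Qed.

End Diagram.

Definition self_conj n (l : n.-tuple 'I_n.+1) := is_partition l && self_conjugate l.

(* The arms of the diagonal cells (the Frobenius coordinates of [l]). *)
Definition arms n (l : n.-tuple 'I_n.+1) : {set 'I_n.+1} :=
  [set k : 'I_n.+1 | [exists i : 'I_n, part_of l i == i + k + 1]].

Definition diag n (l : n.-tuple 'I_n.+1) : {set 'I_n} := [set i : 'I_n | i < part_of l i].

Definition arm n (l : n.-tuple 'I_n.+1) (i : 'I_n) : 'I_n.+1 := inord (part_of l i - i - 1).

Definition coarm n (l : n.-tuple 'I_n.+1) (j : 'I_n) : 'I_n.+1 := inord (j - part_of l j).

Section SelfConjugate.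

Variables (n : nat) (l : n.-tuple 'I_n.+1).

Lemma part_leq i : part_of l i <= n.
Proof.
rewrite /part_of; case: (ltnP i n) => h.
- by rewrite (nth_map ord0) ?size_tuple // -ltnS ltn_ord.
- by rewrite nth_default // size_map size_tuple.
Qed.

Lemma part_out i : n <= i -> part_of l i = 0.
Proof. by move=> h; rewrite /part_of nth_default // size_map size_tuple. Qed.

Lemma part_tnth (i : 'I_n) : part_of l i = tnth l i.
Proof. by rewrite /part_of (nth_map ord0) ?size_tuple // -tnth_nth. Qed.

Lemma conj_partE j : conj_part l j = \sum_(0 <= k < n) (j < part_of l k : nat).
Proof.
rewrite /conj_part -sum1_card big_mkcond big_mkord /=; apply: eq_bigr => k _.
by rewrite inE; case: (j < _).
Qed.

Lemma arms_lt x : has_val (arms l) x -> x < n.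
Proof.
case/existsP=> k /andP[]; rewrite inE => /existsP[i /eqP e] /eqP <-.
by rewrite /=; have := part_leq i; lia.
Qed.

Lemma armE i : nat_of_ord (arm l i) = part_of l i - i - 1.
Proof. by rewrite inordK //; have := part_leq i; lia. Qed.

Lemma coarmE j : nat_of_ord (coarm l j) = j - part_of l j.
Proof. by rewrite inordK //; have := ltn_ord j; lia. Qed.

Hypothesis l_sc : self_conj l.

Lemma self_conj_mono i j : i <= j -> part_of l j <= part_of l i.
Proof.
case/andP: l_sc => /andP[/forallP hm _] _ ij.
case: (ltnP j n) => jn; last by rewrite part_out.
have i_n : i < n by lia.
by have := hm (Ordinal i_n) => /forallP /(_ (Ordinal jn)) /implyP /(_ ij).
Qed.

Lemma self_conj_sum : \sum_(0 <= i < n) part_of l i = n.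
Proof. by case/andP: l_sc => /andP[_ /eqP h] _; rewrite big_mkord. Qed.

Lemma self_conj_conj j : j < n -> conj_part l j = part_of l j.
Proof. by case/andP: l_sc => _ /forallP h jn; apply/eqP; exact: (h (Ordinal jn)). Qed.

Lemma self_conj_sym i j : (j < part_of l i) = (i < part_of l j).
Proof.
case: (ltnP j n) => jn; last first.
  by have := part_leq i; rewrite (part_out jn) ltn0 => h; apply/negbTE; rewrite -leqNgt; lia.
rewrite -(self_conj_conj jn) conj_partE.
apply: (@downclosed_ltn_count n (fun k => j < part_of l k)).
- by move=> a b ab h; apply: leq_trans h (self_conj_mono ab).
- by move=> k; case: (ltnP k n) => // kn; rewrite part_out.
Qed.

Lemma part_addn_neq i j : part_of l i + part_of l j != i + j + 1.
Proof.
case: (ltnP j (part_of l i)) => h.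
- by have := h; rewrite self_conj_sym => h2; lia.
- have : ~~ (i < part_of l j) by rewrite -self_conj_sym -leqNgt.
  by rewrite -leqNgt; lia.
Qed.

Lemma arms_imset : arms l = arm l @: diag l.
Proof.
apply/setP => k; rewrite inE; apply/existsP/imsetP.
- case=> i /eqP e; exists i; first by rewrite inE e; lia.
  by apply: val_inj; rewrite /= armE e; lia.
- by case=> i; rewrite inE => hi ->; exists i; apply/eqP; rewrite armE; lia.
Qed.

Lemma arm_inj : {in diag l &, injective (arm l)}.
Proof.
move=> i j; rewrite !inE => hi hj /(congr1 val) /=; rewrite !armE => e.
apply: val_inj => /=.
by case: (leqP i j) => h; [have := self_conj_mono h | have := self_conj_mono (ltnW h)]; lia.
Qed.

Lemma sum_arms (F : nat -> nat) :
  \sum_(k in arms l) F k = \sum_(i : 'I_n | i < part_of l i) F (part_of l i - i - 1).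
Proof.
rewrite arms_imset (big_imset (fun k : 'I_n.+1 => F k)) /=; last exact: arm_inj.
by apply: eq_big => i; rewrite ?inE // armE.
Qed.

Lemma card_arms : #|arms l| = #|diag l|.
Proof. by rewrite arms_imset card_in_imset //; exact: arm_inj. Qed.

Lemma ltn_nge_arms i d : (i < nge (arms l) d) = (i + d + 1 <= part_of l i).
Proof.
have ngeE : nge (arms l) d = \sum_(0 <= i < n) (i + d + 1 <= part_of l i : nat).
  rewrite /nge (sum_arms (fun k => (d <= k : nat))) big_mkord.
  rewrite [RHS](bigID (fun i : 'I_n => i < part_of l i)) /=.
  rewrite [X in _ = _ + X]big1 ?addn0; last by move=> j hj; lia.
  by apply: eq_bigr => j hj; lia.
rewrite ngeE; symmetry; apply: (@downclosed_ltn_count n (fun i => i + d + 1 <= part_of l i)).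
- by move=> a b ab h; have := self_conj_mono ab; lia.
- by move=> k; case: (ltnP k n) => // kn; rewrite part_out //; lia.
Qed.

Lemma cell_arms i j : cell (arms l) i j = (j < part_of l i).
Proof.
rewrite /cell; case: (leqP i j) => h.
- by rewrite ltn_nge_arms; congr (_ <= _); lia.
- by rewrite ltn_nge_arms self_conj_sym; congr (_ <= _); lia.
Qed.

Lemma weight_arms : weight (arms l) = n.
Proof.
rewrite -sum_cells (eq_bigr (fun i => part_of l i)); last first.
  move=> i _; rewrite (eq_bigr (fun j => (j < part_of l i : nat))); last by move=> j _; rewrite cell_arms.
  by apply: sum_ltn_count; have := part_leq i; lia.
rewrite (@sum_nat_cut n) ?self_conj_sum //; first lia.
by move=> i ni _; rewrite part_out.
Qed.

Lemma coarm_inj : {in ~: diag l &, injective (coarm l)}.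
Proof.
move=> i j; rewrite !inE -!leqNgt => hi hj /(congr1 val) /=; rewrite !coarmE => e.
apply: val_inj => /=.
by case: (leqP i j) => h; [have := self_conj_mono h | have := self_conj_mono (ltnW h)]; lia.
Qed.

Lemma coarms_imset : coarm l @: (~: diag l) = [set k : 'I_n.+1 | (k < n) && (k \notin arms l)].
Proof.
apply/eqP; rewrite eqEcard; apply/andP; split.
- apply/subsetP => k /imsetP[j jD ->]; rewrite inE coarmE.
  apply/andP; split; first by have := ltn_ord j; lia.
  apply/negP; rewrite inE => /existsP[i /eqP e].
  move: jD; rewrite !inE -leqNgt => jD.
  by have := part_addn_neq i j; rewrite e coarmE; lia.
- set C := [set k : 'I_n.+1 | _].
  have C_arms_max : C :|: arms l \subset [set~ (ord_max : 'I_n.+1)].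
    apply/subsetP => k; rewrite !inE => /orP[/andP[kn _] | /existsP[i /eqP e]].
      by apply/eqP => ek; move: kn; rewrite ek /=; lia.
    by apply/eqP => ek; have := part_leq i; rewrite e ek /=; lia.
  have C_arms_disj : C :&: arms l = set0.
    by apply/setP => k; rewrite !inE; case: [exists i, _]; rewrite ?andbF ?andbT.
  have := subset_leq_card C_arms_max.
  rewrite cardsC1 card_ord /= cardsU C_arms_disj cards0 subn0 card_arms //.
  have := cardsC (diag l); rewrite card_ord card_in_imset; last exact: coarm_inj.
  set a := #|~: diag l|; set b := #|diag l|; set c := #|C|; lia.
Qed.

Lemma sum_coarms c :
  \sum_(j : 'I_n | ~~ (j < part_of l j)) (j - part_of l j == c : nat)
  = (c < n) && ~~ has_val (arms l) c.
Proof.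
rewrite (eq_bigl (fun j => j \in ~: diag l)); last by move=> j; rewrite !inE.
rewrite (eq_bigr (fun j => (nat_of_ord (coarm l j) == c : nat))); last by move=> j _; rewrite coarmE.
rewrite -(big_imset (fun k : 'I_n.+1 => (nat_of_ord k == c : nat))) /=; last exact: coarm_inj.
rewrite coarms_imset sum_val_eq; congr nat_of_bool; apply/idP/idP.
- by case/existsP=> k /andP[]; rewrite inE => /andP[kn kP] /eqP <-; rewrite kn has_valE.
- case/andP=> cn nc; have vc : nat_of_ord (inord c : 'I_n.+1) = c by rewrite inordK //; lia.
  by rewrite -vc has_valE inE vc cn /= -has_valE vc.
Qed.

End SelfConjugate.

(* In a self-conjugate partition the hook length of the cell [(i, j)] is
   [part_of l i + part_of l j - i - j - 1]. *)
Definition has_hook n (l : n.-tuple 'I_n.+1) t (i j : 'I_n) : bool :=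
  part_of l i + part_of l j == i + j + t + 1.

Section HookCount.

Variables (n : nat) (l : n.-tuple 'I_n.+1) (t : nat).

Lemma sum_has_hook_off_off :
  \sum_(i : 'I_n | ~~ (i < part_of l i)) \sum_(j : 'I_n | ~~ (j < part_of l j))
    (has_hook l t i j : nat) = 0.
Proof. by rewrite big1 // => i hi; rewrite big1 // => j hj; rewrite /has_hook; lia. Qed.

Hypothesis l_sc : self_conj l.

Lemma nhook_has_hook : nhook l t = \sum_(i : 'I_n) \sum_(j : 'I_n) (has_hook l t i j : nat).
Proof.
rewrite /nhook -sum1_card big_mkcond /= -(pair_bigA _ (fun (i : 'I_n) (j : 'I_n.+1) =>
   if in_diagram l i j && (hook l i j == t) then 1 else 0)) /=.
apply: eq_bigr => i _; rewrite big_ord_recr /=.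
rewrite (_ : in_diagram l i n = false) ?addn0; last by rewrite /in_diagram; have := part_leq l i; lia.
apply: eq_bigr => j _; rewrite /in_diagram /hook /has_hook /= self_conj_conj //.
case: (ltnP j (part_of l i)) => h.
- by have := h; rewrite self_conj_sym // => h2; rewrite /=; case: eqP; lia.
- have : ~~ (i < part_of l j) by rewrite -self_conj_sym // -leqNgt.
  by rewrite -leqNgt => h2; rewrite /=; lia.
Qed.

Lemma sum_has_hook_diag_off :
  \sum_(i : 'I_n | i < part_of l i) \sum_(j : 'I_n | ~~ (j < part_of l j))
    (has_hook l t i j : nat) = ndown t (arms l).
Proof.
rewrite (eq_bigr (fun i : 'I_n => (t <= part_of l i - i - 1) *
    ((part_of l i - i - 1 - t < n) && ~~ has_val (arms l) (part_of l i - i - 1 - t)))); last first.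
  move=> i hi; rewrite -sum_coarms // big_distrr /=; apply: eq_bigr => j hj.
  by rewrite /has_hook; case: (leqP t (part_of l i - i - 1)) => h; lia.
rewrite /ndown -(sum_arms l_sc (fun k => (t <= k) * ((k - t < n) && ~~ has_val (arms l) (k - t)))).
apply: eq_bigr => k kP; have := @arms_lt _ l k; rewrite has_valE => /(_ kP) kn.
by case: (t <= k); lia.
Qed.

Lemma sum_has_hook_diag_diag :
  \sum_(i : 'I_n | i < part_of l i) \sum_(j : 'I_n | j < part_of l j)
    (has_hook l t i j : nat) = npair t (arms l).
Proof.
rewrite (eq_bigr (fun i : 'I_n => (part_of l i - i - 1 < t) *
    has_val (arms l) (t - 1 - (part_of l i - i - 1)))); last first.
  move=> i hi; rewrite -sum_val_eq big_distrr /=.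
  rewrite (sum_arms l_sc (fun k => (part_of l i - i - 1 < t) * (k == t - 1 - (part_of l i - i - 1)))).
  by apply: eq_bigr => j hj; rewrite /has_hook; case: (ltnP (part_of l i - i - 1) t) => h; lia.
rewrite /npair -(sum_arms l_sc (fun k => (k < t) * has_val (arms l) (t - 1 - k))).
by apply: eq_bigr => k _; case: (k < t); case: (has_val _ _).
Qed.

Lemma nhook_arms : nhook l t = nhooks t (arms l).
Proof.
have has_hook_sym i j : has_hook l t i j = has_hook l t j i by rewrite /has_hook; lia.
have sum_off_diag :
    \sum_(i : 'I_n | ~~ (i < part_of l i)) \sum_(j : 'I_n | j < part_of l j)
      (has_hook l t i j : nat) = ndown t (arms l).
  rewrite exchange_big /= -sum_has_hook_diag_off.
  by apply: eq_bigr => i _; apply: eq_bigr => j _; rewrite has_hook_sym.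
rewrite nhook_has_hook nhooksE (bigID (fun i : 'I_n => i < part_of l i)) /=.
rewrite !(eq_bigr _ (fun i _ => bigID (fun j : 'I_n => j < part_of l j) _ _)) /= !big_split /=.
rewrite sum_has_hook_off_off sum_has_hook_diag_off sum_has_hook_diag_diag sum_off_diag.
lia.
Qed.

End HookCount.

Definition row_length K (P : {set 'I_K}) i := \sum_(0 <= j < K.*2) (cell P i j : nat).

Definition partition_of n (P : {set 'I_n.+1}) : n.-tuple 'I_n.+1 :=
  [tuple (inord (row_length P i) : 'I_n.+1) | i < n].

Section RowLength.

Variables (K : nat) (P : {set 'I_K}).

Lemma row_length_cell i j : cell P i j = (j < row_length P i).
Proof.
apply: (@downclosed_ltn_count K.*2 (fun j => cell P i j)).
- by move=> a b ab; apply: cell_leq_r.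
- by move=> k /cell_bound; lia.
Qed.

Lemma row_length_leq i : row_length P i <= weight P.
Proof. by rewrite leqNgt; apply/negP; rewrite -row_length_cell => /cell_weight; lia. Qed.

Lemma row_length_out i : weight P <= i -> row_length P i = 0.
Proof.
move=> wi; apply/eqP; rewrite -leqn0 leqNgt; apply/negP.
by rewrite -row_length_cell => /cell_weight; lia.
Qed.

Lemma row_length_mono i i' : i <= i' -> row_length P i' <= row_length P i.
Proof.
move=> ii; rewrite leqNgt; apply/negP => h.
by have := h; rewrite -row_length_cell => /(cell_leq_l ii); rewrite row_length_cell ltnn.
Qed.

Lemma cell_diag i k : cell P i (i + k) = (i < nge P k).
Proof.
have min_ik : minn i (i + k) = i by lia.
have max_ik : maxn i (i + k) = i + k by lia.
by rewrite /cell min_ik max_ik addKn.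
Qed.

End RowLength.

Section PartitionOf.

Variables (n : nat) (P : {set 'I_n.+1}).
Hypothesis wP : weight P = n.

Lemma part_partition_of i : part_of (partition_of P) i = row_length P i.
Proof.
case: (ltnP i n) => h; last by rewrite part_out // row_length_out ?wP.
rewrite (part_tnth (partition_of P) (Ordinal h)) tnth_mktuple inordK //.
by have := row_length_leq P i; rewrite /= wP; lia.
Qed.

Lemma partition_of_self_conj : self_conj (partition_of P).
Proof.
apply/andP; split; [apply/andP; split|].
- apply/forallP => i; apply/forallP => j; apply/implyP => ij.
  by rewrite !part_partition_of; apply: row_length_mono.
- rewrite (eq_bigr (fun i : 'I_n => row_length P i)); last by move=> i _; rewrite part_partition_of.
  rewrite -(big_mkord xpredT (row_length P)) -(@sum_nat_cut n n.+1.*2); first by rewrite sum_cells wP.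
    by lia.
  by move=> i ni _; rewrite row_length_out ?wP.
- apply/forallP => j; rewrite conj_partE part_partition_of; apply/eqP.
  rewrite (eq_bigr (fun k => (cell P j k : nat))); last first.
    by move=> k _; rewrite part_partition_of -row_length_cell cell_sym.
  rewrite /row_length [RHS](@sum_nat_cut n) //; first by lia.
  by move=> i ni _; apply/eqP; rewrite eqb0; apply/negP => /cell_weight; lia.
Qed.

Lemma arms_partition_of : arms (partition_of P) = P.
Proof.
apply/setP => k; rewrite inE; apply/existsP/idP.
- case=> i /eqP; rewrite part_partition_of => e.
  have in_k : cell P i (i + k) by rewrite row_length_cell e; lia.
  have out_k1 : ~~ cell P i (i + k.+1) by rewrite row_length_cell e; lia.
  move: in_k out_k1; rewrite !cell_diag => in_k out_k1.
  by have := nge_succ P k; rewrite -has_valE; case: (has_val P k) => //; lia.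
- move=> kP; have k_succ := nge_succ P k; rewrite has_valE kP /= in k_succ.
  have k_weight := nge_weight P k; rewrite wP in k_weight.
  have ngek : nge P k <= n by apply: leq_trans k_weight; rewrite leq_pmull // addn1.
  have row_n : nge P k.+1 < n by lia.
  exists (Ordinal row_n); rewrite part_partition_of /=; apply/eqP.
  have in_k : cell P (nge P k.+1) (nge P k.+1 + k) by rewrite cell_diag; lia.
  have out_k1 : ~~ cell P (nge P k.+1) (nge P k.+1 + k.+1) by rewrite cell_diag; lia.
  by move: in_k out_k1; rewrite !row_length_cell; lia.
Qed.

End PartitionOf.

Lemma partition_of_arms n (l : n.-tuple 'I_n.+1) : self_conj l -> partition_of (arms l) = l.
Proof.
move=> l_sc; apply: eq_from_tnth => i; apply: val_inj.
have row_i : row_length (arms l) i = part_of l i.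
  rewrite /row_length (eq_bigr (fun j => (j < part_of l i : nat))); last first.
    by move=> j _; rewrite cell_arms.
  by apply: sum_ltn_count; have := part_leq l i; lia.
by rewrite tnth_mktuple /= -part_tnth inordK row_i //; have := part_leq l i; lia.
Qed.

Lemma astar_hook_total t n : astar t n = hook_total n t n.
Proof.
rewrite /astar /hook_total.
rewrite (eq_bigl (mem (partition_of (n:=n) @: [set P : {set 'I_n.+1} | weight P == n]))); last first.
  move=> l; apply/idP/imsetP => [l_sc | [P]].
  - by exists (arms l); rewrite ?inE ?weight_arms ?partition_of_arms.
  - by rewrite inE => /eqP wP ->; exact: partition_of_self_conj.
rewrite big_imset /=; last first.
  move=> P Q; rewrite !inE => /eqP wP /eqP wQ e.
  by rewrite -(arms_partition_of wP) -(arms_partition_of wQ) e.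
apply: eq_big => P; first by rewrite inE.
rewrite inE => /eqP wP.
by rewrite nhook_arms ?arms_partition_of //; exact: partition_of_self_conj.
Qed.

Theorem corollary1p3 (n m : nat) : 1 <= m -> astar (2 * m) n = 0 %[mod 2 * m].
Proof.
move=> m_gt0; rewrite mod0n astar_hook_total; apply/eqP.
by apply: hook_total_dvd; rewrite ?oddM ?muln_gt0.
Qed.
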